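(* Let $P_1,\dots,P_T\in\mathbb{R}^{d\times d}$ be orthogonal projections and let $\tau(1),\tau(2),\dots$ be i.i.d. uniform on $\{1,\dots,T\}$. Let $\bar r=\frac1T\sum_{m=1}^T(d-\operatorname{rank}P_m)$. Then for every $k\ge1$, $$\mathbb{E}_\tau\Big[\frac1T\sum_{m=1}^T\big\|(I-P_m)P_{\tau(k)}\cdots P_{\tau(1)}\big\|^2\Big]\le \frac{1}{k}\cdot\frac1T\sum_{m=1}^T\operatorname{rank}(P_m)=\frac{d-\bar r}{k}.$$
   Context: $\|\cdot\|$ denotes the spectral norm. (In the application, $P_m=I-X_m^+X_m$ is the projection onto $\ker X_m$, so $\operatorname{rank}P_m=d-\operatorname{rank}X_m$ and the bound reads $(d-r_{\mathrm{avg}})/k$ with $r_{\mathrm{avg}}$ the average rank of the data matrices.) *)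

From HB Require Import structures.
From mathcomp Require Import all_boot all_order all_algebra.
From mathcomp Require Import classical_sets reals.
Set Implicit Arguments. Unset Strict Implicit. Unset Printing Implicit Defensive.
Import Order.TTheory GRing.Theory Num.Theory.
Local Open Scope ring_scope.
Local Open Scope classical_set_scope.

Definition vnorm (R : realType) (d : nat) (v : 'cV[R]_d) : R :=
  Num.sqrt (\sum_(i < d) (v i 0) ^+ 2).

Definition specnorm (R : realType) (d : nat) (A : 'M[R]_d) : R :=
  sup [set vnorm (A *m x) | x in [set x : 'cV[R]_d | vnorm x <= 1]].

Definition orth_proj (R : realType) (d : nat) (P : 'M[R]_d) : Prop :=
  P^T = P /\ P *m P = P.

(* For tau = (tau 0, ..., tau (k-1)), the product
   P_{tau(k-1)} *m ... *m P_{tau(0)} (rightmost factor applied first). *)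
Definition prodP (R : realType) (d T k : nat) (P : 'I_T -> 'M[R]_d)
  (tau : 'I_k -> 'I_T) : 'M[R]_d :=
  foldl (fun A j => P (tau j) *m A) 1%:M (enum 'I_k).

From HB Require Import structures.
From mathcomp Require Import all_boot all_order all_algebra.
From mathcomp Require Import classical_sets reals.
From mathcomp Require Import ring lra.
Set Implicit Arguments. Unset Strict Implicit. Unset Printing Implicit Defensive.
Import Order.TTheory GRing.Theory Num.Theory.
Local Open Scope ring_scope.

(* Bound the spectral norm by the Frobenius norm and average over sequences s of
   projection indices.  For the product Q_s := P_(s_n) ... P_(s_1), Pythagoras
   gives |Q_s|^2 = |P_m Q_s|^2 + |(I - P_m) Q_s|^2, so the mean residual
   c_n := E [avg_m |(I - P_m) Q_s|^2] over sequences of length n is the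
   decrement e_n - e_(n+1) of the energy e_n := E |Q_s|^2.  Appending a
   projection on the right cannot increase a Frobenius norm, so c_n is
   nonincreasing; hence k c_k <= c_1 + ... + c_k = e_1 - e_(k+1) <= e_1, and
   e_1 is the average rank because |P|^2 = tr P = rank P for a projection. *)

Section SumSeqs.
Variable T : nat.

Fixpoint sum_seqs {V : zmodType} (n : nat) (h : seq 'I_T -> V) : V :=
  if n is n'.+1 then \sum_(a < T) sum_seqs n' (fun s => h (a :: s)) else h [::].

Lemma eq_sum_seqs (V : zmodType) n (f g : seq 'I_T -> V) :
  f =1 g -> sum_seqs n f = sum_seqs n g.
Proof.
elim: n f g => [|n IH] f g fg /=; first exact: fg.
by apply: eq_bigr => a _; apply: IH => s; apply: fg.
Qed.

Lemma ler_sum_seqs (R : numDomainType) n (f g : seq 'I_T -> R) :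
  (forall s, f s <= g s) -> sum_seqs n f <= sum_seqs n g.
Proof.
elim: n f g => [|n IH] f g fg /=; first exact: fg.
by apply: ler_sum => a _; apply: IH => s; apply: fg.
Qed.

Lemma sum_seqs_ge0 (R : numDomainType) n (f : seq 'I_T -> R) :
  (forall s, 0 <= f s) -> 0 <= sum_seqs n f.
Proof.
elim: n f => [|n IH] f f_ge0 /=; first exact: f_ge0.
by apply: sumr_ge0 => a _; apply: IH => s; apply: f_ge0.
Qed.

Lemma sum_seqsB (V : zmodType) n (f g : seq 'I_T -> V) :
  sum_seqs n (fun s => f s - g s) = sum_seqs n f - sum_seqs n g.
Proof.
elim: n f g => [|n IH] f g //=.
by rewrite -sumrB; apply: eq_bigr => a _; rewrite IH.
Qed.

Lemma sum_seqsZ (R : pzRingType) n c (f : seq 'I_T -> R) :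
  sum_seqs n (fun s => c * f s) = c * sum_seqs n f.
Proof.
elim: n f => [|n IH] f //=.
by rewrite mulr_sumr; apply: eq_bigr => a _; rewrite IH.
Qed.

Lemma sum_seqsSr (V : zmodType) n (h : seq 'I_T -> V) :
  sum_seqs n.+1 h = sum_seqs n (fun s => \sum_(a < T) h (rcons s a)).
Proof.
elim: n h => [|n IH] h //.
exact: eq_bigr (fun a _ => IH (fun s => h (a :: s))).
Qed.

Definition ffun_cons k (p : 'I_T * {ffun 'I_k -> 'I_T}) : {ffun 'I_k.+1 -> 'I_T} :=
  [ffun i => if unlift ord0 i is Some j then p.2 j else p.1].

Lemma ffun_cons_bij k : bijective (@ffun_cons k).
Proof.
exists (fun f : {ffun 'I_k.+1 -> 'I_T} => (f ord0, [ffun j => f (lift ord0 j)])).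
  case=> a f; rewrite /ffun_cons /= ffunE unlift_none; congr pair.
  by apply/ffunP => j; rewrite !ffunE liftK.
move=> f; apply/ffunP => i; rewrite ffunE.
by case: unliftP => [j ->|->] /=; rewrite ?ffunE.
Qed.

Lemma sum_ffun_seqs (V : zmodType) k (h : seq 'I_T -> V) :
  \sum_(tau : {ffun 'I_k -> 'I_T}) h [seq tau i | i <- enum 'I_k] = sum_seqs k h.
Proof.
elim: k h => [|k IH] h /=.
  by rewrite enum_ord0 /= sumr_const card_ffun !card_ord.
rewrite (reindex (@ffun_cons k)) /=; last exact/onW_bij/ffun_cons_bij.
rewrite -(pair_big xpredT xpredT
  (fun a f => h [seq ffun_cons (a, f) i | i <- enum 'I_k.+1])) /=.
apply: eq_bigr => a _; rewrite -IH; apply: eq_bigr => f _.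
rewrite enum_ordSl /= ffunE unlift_none -map_comp; congr (h (_ :: _)).
by apply: eq_map => j /=; rewrite ffunE liftK.
Qed.

Definition mean_seqs (R : fieldType) n (h : seq 'I_T -> R) : R :=
  T%:R ^- n * sum_seqs n h.

Lemma eq_mean_seqs (R : fieldType) n (f g : seq 'I_T -> R) :
  f =1 g -> mean_seqs n f = mean_seqs n g.
Proof. by move=> fg; rewrite /mean_seqs (eq_sum_seqs _ fg). Qed.

Lemma mean_seqsS (R : fieldType) n (h : seq 'I_T -> R) :
  mean_seqs n.+1 h = T%:R^-1 * \sum_(a < T) mean_seqs n (fun s => h (a :: s)).
Proof. by rewrite /mean_seqs -mulr_sumr mulrA -invfM -exprS. Qed.

Lemma mean_seqsSr (R : fieldType) n (h : seq 'I_T -> R) :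
  mean_seqs n.+1 h = mean_seqs n (fun s => T%:R^-1 * \sum_(a < T) h (rcons s a)).
Proof. by rewrite /mean_seqs sum_seqsSr sum_seqsZ exprSr invfM mulrA. Qed.

Lemma mean_seqsB (R : fieldType) n (f g : seq 'I_T -> R) :
  mean_seqs n (fun s => f s - g s) = mean_seqs n f - mean_seqs n g.
Proof. by rewrite /mean_seqs sum_seqsB mulrBr. Qed.

Lemma ler_mean_seqs (R : numFieldType) n (f g : seq 'I_T -> R) :
  (forall s, f s <= g s) -> mean_seqs n f <= mean_seqs n g.
Proof. by move=> fg; rewrite ler_wpM2l ?ler_sum_seqs // invr_ge0 exprn_ge0. Qed.

Lemma mean_seqs_ge0 (R : numFieldType) n (f : seq 'I_T -> R) :
  (forall s, 0 <= f s) -> 0 <= mean_seqs n f.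
Proof. by move=> f_ge0; rewrite mulr_ge0 ?sum_seqs_ge0 // invr_ge0 exprn_ge0. Qed.

End SumSeqs.

Lemma mxtrace_pid_mx (R : pzRingType) n r :
  (r <= n)%N -> \tr (pid_mx r : 'M[R]_n) = r%:R.
Proof.
move=> le_rn; rewrite /mxtrace (eq_bigr (fun i : 'I_n => (i < r)%N%:R)); last first.
  by move=> i _; rewrite mxE eqxx.
rewrite -(big_mkord xpredT (fun i => (i < r)%N%:R)) (big_cat_nat (leq0n r) le_rn) /=.
rewrite [X in _ + X]big_nat_cond [X in _ + X]big1 ?addr0; last first.
  by move=> i /andP[/andP[/leq_gtF -> _] _].
rewrite big_nat_cond (eq_bigr (fun _ => 1)); last by move=> i /andP[/andP[_ ->]].
by rewrite -big_nat_cond sumr_const_nat subn0.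
Qed.

Lemma mxtrace_idempotent (R : fieldType) n (P : 'M[R]_n) :
  P *m P = P -> \tr P = (\rank P)%:R.
Proof.
move=> PP; set L := col_ebase P; set U := row_ebase P; set r := \rank P.
have P_LU : L *m pid_mx r *m U = P by apply: mulmx_ebase.
have L_unit : L \in unitmx by apply: col_ebase_unit.
have U_unit : U \in unitmx by apply: row_ebase_unit.
have le_rn : (r <= n)%N by apply: rank_leq_row.
have pid_ULpid : pid_mx r *m (U *m L) *m pid_mx r = pid_mx r :> 'M[R]_n.
  have : L *m (pid_mx r *m (U *m L) *m pid_mx r) *m U = L *m pid_mx r *m U.
    by rewrite [RHS]P_LU -PP -P_LU !mulmxA.
  move/(congr1 (mulmx^~ (invmx U))); rewrite -!mulmxA !mulmxV // !mulmx1.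
  by move/(congr1 (mulmx (invmx L))); rewrite !mulmxA !mulVmx // !mul1mx.
rewrite -P_LU -mulmxA mxtrace_mulC -mulmxA -{1}(pid_mx_id _ _ _ le_rn).
by rewrite -mulmxA mxtrace_mulC pid_ULpid mxtrace_pid_mx.
Qed.

Lemma cauchy_schwarz (R : realDomainType) n (a x : 'I_n -> R) :
  (\sum_j a j * x j) ^+ 2 <= (\sum_j a j ^+ 2) * (\sum_j x j ^+ 2).
Proof.
set A := \sum_j a j ^+ 2; set X := \sum_j x j ^+ 2; set C := \sum_j a j * x j.
have lagrange : \sum_j \sum_l (a j * x l - a l * x j) ^+ 2 = 2 * (A * X) - 2 * C ^+ 2.
  transitivity (\sum_j (a j ^+ 2 * X + x j ^+ 2 * A - 2 * (a j * x j) * C)).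
    apply: eq_bigr => j _; rewrite /X /A /C !mulr_sumr -big_split -sumrB /=.
    by apply: eq_bigr => l _; ring.
  by rewrite sumrB big_split /= -!mulr_suml -/A -/X -/C -mulr_sumr -/C; ring.
have : 0 <= \sum_j \sum_l (a j * x l - a l * x j) ^+ 2.
  by apply: sumr_ge0 => j _; apply: sumr_ge0 => l _; apply: sqr_ge0.
rewrite lagrange; lra.
Qed.

Definition frobenius_sq (R : pzRingType) n (A : 'M[R]_n) : R := \tr (A^T *m A).

Lemma frobenius_sqE (R : pzRingType) n (A : 'M[R]_n) :
  frobenius_sq A = \sum_i \sum_j A i j ^+ 2.
Proof.
rewrite /frobenius_sq /mxtrace exchange_big; apply: eq_bigr => j _.
by rewrite mxE; apply: eq_bigr => i _; rewrite mxE expr2.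
Qed.

Lemma frobenius_sq_ge0 (R : realDomainType) n (A : 'M[R]_n) : 0 <= frobenius_sq A.
Proof.
by rewrite frobenius_sqE; apply: sumr_ge0 => i _; apply: sumr_ge0 => j _; apply: sqr_ge0.
Qed.

Lemma frobenius_sq_tr (R : comPzRingType) n (A : 'M[R]_n) :
  frobenius_sq A^T = frobenius_sq A.
Proof. by rewrite /frobenius_sq trmxK mxtrace_mulC. Qed.

Section OrthProj.
Variables (R : realType) (d : nat).

Lemma orth_proj_compl (P : 'M[R]_d) : orth_proj P -> orth_proj (1%:M - P).
Proof.
case=> PT PP; split; first by rewrite linearB /= trmx1 PT.
by rewrite mulmxBl mul1mx mulmxBr mulmx1 PP subrr subr0.
Qed.

Lemma frobenius_sq_projl (P B : 'M[R]_d) : orth_proj P ->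
  frobenius_sq (P *m B) = \tr (B^T *m P *m B).
Proof. by case=> PT PP; rewrite /frobenius_sq trmx_mul PT mulmxA -(mulmxA _ P P) PP. Qed.

Lemma frobenius_sq_pythagoras (P B : 'M[R]_d) : orth_proj P ->
  frobenius_sq B = frobenius_sq (P *m B) + frobenius_sq ((1%:M - P) *m B).
Proof.
move=> hP; rewrite !frobenius_sq_projl //; last exact: orth_proj_compl.
by rewrite mulmxBr mulmx1 mulmxBl -mxtraceD addrC subrK.
Qed.

Lemma frobenius_sq_mulr_proj (P B : 'M[R]_d) : orth_proj P ->
  frobenius_sq (B *m P) <= frobenius_sq B.
Proof.
move=> hP; have [PT _] := hP.
rewrite -frobenius_sq_tr -[frobenius_sq B]frobenius_sq_tr trmx_mul PT.
rewrite (frobenius_sq_pythagoras B^T hP) lerDl; exact: frobenius_sq_ge0.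
Qed.

Lemma frobenius_sq_proj (P : 'M[R]_d) : orth_proj P -> frobenius_sq P = (\rank P)%:R.
Proof. by case=> PT PP; rewrite /frobenius_sq PT PP mxtrace_idempotent. Qed.

End OrthProj.

Section Norms.
Variables (R : realType) (d : nat).

Lemma vnorm_mulmx_le (A : 'M[R]_d) (x : 'cV[R]_d) :
  vnorm x <= 1 -> vnorm (A *m x) <= Num.sqrt (frobenius_sq A).
Proof.
move=> x_le1; have x2_le1 : \sum_j x j 0 ^+ 2 <= 1.
  by rewrite -(ler_sqrt _ ler01) ?sqrtr1 //; apply: sumr_ge0 => j _; apply: sqr_ge0.
rewrite /vnorm ler_sqrt ?frobenius_sq_ge0 // frobenius_sqE; apply: ler_sum => i _.
rewrite mxE; apply: le_trans (cauchy_schwarz (A i) (x^~ 0)) _.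
by rewrite -[leRHS]mulr1 ler_wpM2l // sumr_ge0 // => j _; apply: sqr_ge0.
Qed.

Local Open Scope classical_set_scope.

Lemma specnorm_sqr_le (A : 'M[R]_d) : specnorm A ^+ 2 <= frobenius_sq A.
Proof.
set E := [set vnorm (A *m x) | x in [set x : 'cV[R]_d | vnorm x <= 1]].
have vnorm0 : vnorm (0 : 'cV[R]_d) = 0.
  by rewrite /vnorm big1 ?sqrtr0 // => i _; rewrite mxE expr0n.
have E0 : E 0 by exists 0; rewrite /= ?mulmx0 vnorm0.
have E_ub : ubound E (Num.sqrt (frobenius_sq A)).
  by move=> _ [x x_le1 <-]; apply: vnorm_mulmx_le.
have sup_ge0 : 0 <= specnorm A.
  by apply: sup_upper_bound => //; split; [exists 0 | exists (Num.sqrt (frobenius_sq A))].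
have sup_le : specnorm A <= Num.sqrt (frobenius_sq A) by apply: ge_sup => //; exists 0.
by rewrite -[leRHS](sqr_sqrtr (frobenius_sq_ge0 A)) !expr2 ler_pM.
Qed.

End Norms.

Lemma nonincreasing_mul_le_sum (R : numDomainType) (u : nat -> R) k :
  (forall n, u n.+1 <= u n) -> k%:R * u k <= \sum_(1 <= n < k.+1) u n.
Proof.
move=> u_noninc; elim: k => [|k IH]; first by rewrite mul0r big_geq.
rewrite big_nat_recr //= -[k.+1]addn1 natrD mulrDl mul1r lerD2r addn1.
by apply: le_trans _ IH; rewrite ler_wpM2l.
Qed.

Lemma mean_subn (R : numFieldType) T d (f : 'I_T -> nat) :
  (0 < T)%N -> (forall m, f m <= d)%N ->
  T%:R^-1 * \sum_(m < T) (d - f m)%:R = d%:R - T%:R^-1 * \sum_(m < T) (f m)%:R :> R.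
Proof.
move=> T_gt0 f_le; rewrite (eq_bigr (fun m => d%:R - (f m)%:R)); last first.
  by move=> m _; rewrite natrB.
rewrite sumrB sumr_const card_ord mulrBr -[d%:R *+ T]mulr_natl mulKf //.
by rewrite pnatr_eq0 -lt0n.
Qed.

Section RandomProducts.
Variables (R : realType) (d T : nat) (P : 'I_T -> 'M[R]_d).
Hypotheses (T_gt0 : (0 < T)%N) (P_proj : forall m, orth_proj (P m)).

Definition prod_proj (s : seq 'I_T) : 'M[R]_d := foldl (fun A m => P m *m A) 1%:M s.

Lemma prod_proj_rcons s m : prod_proj (rcons s m) = P m *m prod_proj s.
Proof. by rewrite /prod_proj foldl_rcons. Qed.

Lemma prod_proj_cons m s : prod_proj (m :: s) = prod_proj s *m P m.
Proof.
have foldl_mulmxr B C : foldl (fun A x => P x *m A) (B *m C) s =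
    foldl (fun A x => P x *m A) B s *m C.
  by elim: s B => [|a s IH] B //=; rewrite mulmxA IH.
by rewrite /prod_proj /= -foldl_mulmxr mul1mx mulmx1.
Qed.

Lemma prodP_prod_proj k (tau : 'I_k -> 'I_T) :
  prodP P tau = prod_proj [seq tau i | i <- enum 'I_k].
Proof. by rewrite /prodP /prod_proj; elim: (enum 'I_k) 1%:M => [|i s IH] B //=. Qed.

Definition residual (s : seq 'I_T) : R :=
  T%:R^-1 * \sum_(m < T) frobenius_sq ((1%:M - P m) *m prod_proj s).

Definition energy n : R := mean_seqs n (fun s => frobenius_sq (prod_proj s)).

Let T_neq0 : T%:R != 0 :> R.
Proof. by rewrite pnatr_eq0 -lt0n. Qed.

Lemma residualE s : residual s =
  frobenius_sq (prod_proj s) - T%:R^-1 * \sum_(m < T) frobenius_sq (prod_proj (rcons s m)).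
Proof.
rewrite /residual (eq_bigr (fun m => frobenius_sq (prod_proj s) -
    frobenius_sq (prod_proj (rcons s m)))); last first.
  move=> m _; rewrite (frobenius_sq_pythagoras (prod_proj s) (P_proj m)).
  by rewrite prod_proj_rcons addrAC subrr add0r.
rewrite sumrB sumr_const card_ord mulrBr -[frobenius_sq _ *+ T]mulr_natr.
by rewrite mulrCA mulVf ?mulr1.
Qed.

Lemma mean_residual n : mean_seqs n residual = energy n - energy n.+1.
Proof.
by rewrite /energy mean_seqsSr -mean_seqsB; apply: eq_mean_seqs => s; rewrite residualE.
Qed.

Lemma residual_cons m s : residual (m :: s) <= residual s.
Proof.
rewrite ler_wpM2l ?invr_ge0 // ler_sum // => i _.
by rewrite prod_proj_cons mulmxA frobenius_sq_mulr_proj.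
Qed.

Lemma mean_residual_nonincreasing n : mean_seqs n.+1 residual <= mean_seqs n residual.
Proof.
rewrite mean_seqsS; apply: (@le_trans _ _ (T%:R^-1 * \sum_(a < T) mean_seqs n residual)).
  rewrite ler_wpM2l ?invr_ge0 // ler_sum // => a _.
  by apply: ler_mean_seqs => s; apply: residual_cons.
by rewrite sumr_const card_ord -[mean_seqs _ _ *+ T]mulr_natl mulKf ?T_neq0.
Qed.

Lemma sum_mean_residual n :
  \sum_(1 <= i < n.+1) mean_seqs i residual = energy 1 - energy n.+1.
Proof.
rewrite (@telescope_sumr_eq _ _ _ (fun i => - energy i)) ?opprK 1?addrC // => i _.
by rewrite mean_residual opprK addrC.
Qed.

Lemma energy_ge0 n : 0 <= energy n.
Proof. by apply: mean_seqs_ge0 => s; apply: frobenius_sq_ge0. Qed.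

Lemma energy1 : energy 1 = T%:R^-1 * \sum_(m < T) (\rank (P m))%:R.
Proof.
rewrite /energy mean_seqsS; congr (_ * _); apply: eq_bigr => m _.
by rewrite /mean_seqs /= expr0 invr1 mul1r /prod_proj /= mulmx1 frobenius_sq_proj.
Qed.

End RandomProducts.

Theorem mainTheorem8 (R : realType) (d T : nat) (P : 'I_T -> 'M[R]_d)
  (hT : (0 < T)%N) (hP : forall m, orth_proj (P m)) (k : nat) (hk : (1 <= k)%N) :
  let rbar := T%:R^-1 * \sum_(m < T) (d - \rank (P m))%:R in
  let RHS := k%:R^-1 * (T%:R^-1 * \sum_(m < T) (\rank (P m))%:R) in
  (T%:R ^- k) * \sum_(tau : {ffun 'I_k -> 'I_T})
      (T%:R^-1 * \sum_(m < T) specnorm ((1%:M - P m) *m prodP P tau) ^+ 2)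
    <= RHS
  /\ RHS = (d%:R - rbar) / k%:R.
Proof.
move=> rbar RHS; split; last first.
  rewrite /RHS /rbar mean_subn // => [|m]; last exact: rank_leq_row.
  by rewrite opprB addrC subrK mulrC.
apply: (@le_trans _ _ (mean_seqs k (residual P))).
  rewrite /mean_seqs -sum_ffun_seqs ler_wpM2l ?invr_ge0 ?exprn_ge0 // ler_sum // => tau _.
  rewrite prodP_prod_proj ler_wpM2l ?invr_ge0 // ler_sum // => m _.
  exact: specnorm_sqr_le.
apply: (@le_trans _ _ (k%:R^-1 * \sum_(1 <= n < k.+1) mean_seqs n (residual P))).
  rewrite ler_pdivlMl ?ltr0n //; apply: nonincreasing_mul_le_sum => n.
  exact: mean_residual_nonincreasing.
rewrite sum_mean_residual // /RHS -energy1 // ler_wpM2l ?invr_ge0 ?ler0n // gerDl oppr_le0.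
exact: energy_ge0.
Qed.
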